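(* Let $\lambda$ be a partition of $n$. The number of connected components of the graph $\mathcal A_\lambda$ is at most $d_\lambda$.
   Context: Fix $n\ge1$; $\overline i=i+n\mathbb Z$, $[\overline n]=\{\overline1,\dots,\overline n\}$. A tabloid of shape $\lambda$ is a sequence $(T_1,\dots,T_{\ell(\lambda)})$ of pairwise disjoint subsets of $[\overline n]$ with $|T_r|=\lambda_r$ and union $[\overline n]$ (row 1 highest). $\tau(T)=\{\overline i:\overline i\text{ lies in a strictly higher row than }\overline{i+1}\}$. $T,T'$ are connected by a Knuth move if $T'$ is obtained from $T$ by exchanging $\overline i$ and $\overline{i+1}$ for some $i$ and neither of $\tau(T),\tau(T')$ contains the other. $\mathcal A_\lambda$ is the graph on tabloids of shape $\lambda$ whose edges are Knuth moves. $d_\lambda=\gcd(\lambda'_1,\lambda'_2,\dots)$ with $\lambda'$ the conjugate partition. *)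

From mathcomp Require Import all_boot.
Set Implicit Arguments. Unset Strict Implicit. Unset Printing Implicit Defensive.

Definition is_partition (n : nat) (la : seq nat) : bool :=
  [&& sorted geq la, all (fun x => 0 < x) la & sumn la == n].

(* Conjugate partition: conj_part la j = lambda'_(j+1) = #{r | lambda_r > j}. *)
Definition conj_part (la : seq nat) (j : nat) : nat := count (fun x => j < x) la.

Definition d_lambda (la : seq nat) : nat :=
  foldr gcdn 0 [seq conj_part la j | j <- iota 0 (head 0 la)].

(* The residues [n-bar] are 'I_n; i+1 mod n is ordS i.  A tabloid of shape la
   (T_1,...,T_l) is encoded by its row function: T x = r  iff  x in T_(r+1)
   (rows indexed 0..l-1, row 0 highest), with |T_(r+1)| = lambda_(r+1). *)
Definition is_tabloid (n : nat) (la : seq nat) (T : {ffun 'I_n -> 'I_(size la)}) : bool :=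
  [forall r : 'I_(size la), #|[set x | T x == r]| == nth 0 la r].

Definition tabloid (n : nat) (la : seq nat) :=
  {T : {ffun 'I_n -> 'I_(size la)} | @is_tabloid n la T}.

(* tau(T) = { i | i lies in a strictly higher row than i+1 }. *)
Definition tau (n : nat) (la : seq nat) (T : {ffun 'I_n -> 'I_(size la)}) : {set 'I_n} :=
  [set i : 'I_n | (T i < T (ordS i))%N].

Definition swap_entries (n : nat) (la : seq nat) (T : {ffun 'I_n -> 'I_(size la)})
  (i : 'I_n) : {ffun 'I_n -> 'I_(size la)} :=
  [ffun x => T (if x == i then ordS i else if x == ordS i then i else x)].

Definition knuth_move (n : nat) (la : seq nat) (T T' : tabloid n la) : bool :=
  [exists i : 'I_n,
     [&& val T' == @swap_entries n la (val T) i,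
         ~~ (@tau n la (val T) \subset @tau n la (val T')) &
         ~~ (@tau n la (val T') \subset @tau n la (val T))]].

(* Connected components of the graph A_lambda: the classes of the
   reflexive-transitive closure of the (symmetric) Knuth-move relation. *)
Definition components_A (n : nat) (la : seq nat) : {set {set tabloid n la}} :=
  [set [set y | connect (@knuth_move n la) x y] | x : tabloid n la].

From mathcomp Require Import all_boot zify.
From Stdlib Require Import Relation_Operators.
Set Implicit Arguments. Unset Strict Implicit. Unset Printing Implicit Defensive.

(* Read a tabloid T as the circular word T(0) T(1) ... T(n-1) of its row
   indices.  Then tau T is the set of circular ascents of this word, and a Knuth
   move may exchange two adjacent letters x <> y whenever a neighbouring letter c
   separates them: min x y <= c < max x y for the left neighbour, and
   min x y < c <= max x y for the right one (a circular dual Knuth relation).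
   Any word of content lambda is related to a rotation of the column word
   (0 1 .. lambda'_1 - 1) (0 1 .. lambda'_2 - 1) ..., built one column at a time,
   since a letter below the height of a finished column commutes past it.
   Carrying a whole column around the circle relates the column word to its
   rotation by each lambda'_j, hence, by Bezout, by d_lambda.  So every component
   contains a tabloid whose word is one of the rotations of the column word by
   0, ..., d_lambda - 1. *)

Definition sep_left (c x y : nat) := (minn x y <= c) && (c < maxn x y).
Definition sep_right (c x y : nat) := (minn x y < c) && (c <= maxn x y).

Lemma sep_leftC c x y : sep_left c x y = sep_left c y x.
Proof. by rewrite /sep_left minnC maxnC. Qed.

Lemma sep_rightC c x y : sep_right c x y = sep_right c y x.
Proof. by rewrite /sep_right minnC maxnC. Qed.

Inductive knuth_step : seq nat -> seq nat -> Prop :=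
| knuth_stepL p q c x y : sep_left c x y ->
    knuth_step (rcons p c ++ [:: x; y] ++ q) (rcons p c ++ [:: y; x] ++ q)
| knuth_stepR p q c x y : sep_right c x y ->
    knuth_step (p ++ [:: x; y] ++ c :: q) (p ++ [:: y; x] ++ c :: q).

Notation knuth_star := (clos_refl_trans (seq nat) knuth_step).

Lemma knuth_step_sym u v : knuth_step u v -> knuth_step v u.
Proof.
case=> p q c x y sep; first by apply: knuth_stepL; rewrite sep_leftC.
by apply: knuth_stepR; rewrite sep_rightC.
Qed.

Lemma knuth_step_perm u v : knuth_step u v -> perm_eq u v.
Proof. by case=> p q c x y _; rewrite perm_cat2l perm_cat2r (perm_catC [:: x]). Qed.

Lemma knuth_step_cat p q u v : knuth_step u v -> knuth_step (p ++ u ++ q) (p ++ v ++ q).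
Proof.
case=> p' q' c x y sep.
- by have := knuth_stepL (p ++ p') (q' ++ q) sep; rewrite rcons_cat -!catA.
- by have := knuth_stepR (p ++ p') (q' ++ q) sep; rewrite -!catA.
Qed.

Lemma knuth_star_sym u v : knuth_star u v -> knuth_star v u.
Proof.
elim=> [u1 u2 /knuth_step_sym | u1 | u1 u2 u3 _ IH1 _ IH2].
- exact: rt_step.
- exact: rt_refl.
- exact: rt_trans IH2 IH1.
Qed.

Lemma knuth_star_perm u v : knuth_star u v -> perm_eq u v.
Proof.
elim=> [u1 u2 /knuth_step_perm // | u1 | u1 u2 u3 _ IH1 _ IH2].
- exact: perm_refl.
- exact: perm_trans IH1 IH2.
Qed.

Lemma knuth_star_cat p q u v : knuth_star u v -> knuth_star (p ++ u ++ q) (p ++ v ++ q).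
Proof.
elim=> [u1 u2 /(knuth_step_cat p q) | u1 | u1 u2 u3 _ IH1 _ IH2].
- exact: rt_step.
- exact: rt_refl.
- exact: rt_trans IH1 IH2.
Qed.

Lemma knuth_star_catl p u v : knuth_star u v -> knuth_star (p ++ u) (p ++ v).
Proof. by move=> /(knuth_star_cat p [::]); rewrite !cats0. Qed.

Lemma knuth_starL p q c x y : sep_left c x y ->
  knuth_star (p ++ [:: c; x; y] ++ q) (p ++ [:: c; y; x] ++ q).
Proof. by move=> sep; have := rt_step _ _ _ _ (knuth_stepL p q sep); rewrite !cat_rcons. Qed.

Lemma knuth_starR p q c x y : sep_right c x y ->
  knuth_star (p ++ [:: x; y; c] ++ q) (p ++ [:: y; x; c] ++ q).
Proof. by move=> sep; apply: rt_step; exact: knuth_stepR. Qed.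

Lemma slide_small_left m c s a p q : a <= c < s ->
  knuth_star (p ++ c :: iota s m ++ a :: q) (p ++ c :: a :: iota s m ++ q).
Proof.
elim: m c s p => [|m IH] c s p /andP [le_ac lt_cs] /=; first exact: rt_refl.
apply: rt_trans.
  have := IH s s.+1 (p ++ [:: c]); rewrite -?catA /=; apply; lia.
have := @knuth_starL p (iota s.+1 m ++ q) c s a; rewrite /= -?catA /=; apply.
by rewrite /sep_left; lia.
Qed.

Lemma slide_large_left m s b c p q : s + m <= c <= b ->
  knuth_star (p ++ iota s m ++ b :: c :: q) (p ++ b :: iota s m ++ c :: q).
Proof.
elim: m s p => [|m IH] s p /andP [le_c le_cb] /=; first exact: rt_refl.
apply: rt_trans.
  have := IH s.+1 (p ++ [:: s]); rewrite -?catA /=; apply; lia.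
case: m {IH} le_c => [|m] le_c.
- have := @knuth_starR p q c s b; rewrite /= -?catA /=; apply.
  by rewrite /sep_right; lia.
- have := @knuth_starR p (iota s.+2 m ++ c :: q) s.+1 s b; rewrite /= -?catA /=; apply.
  by rewrite /sep_right; lia.
Qed.

Lemma iota_commute j a q : a < j -> knuth_star (iota 0 j ++ a :: q) (a :: iota 0 j ++ q).
Proof.
move=> lt_aj.
have -> : iota 0 j = iota 0 a ++ a :: iota a.+1 (j - a.+1).
  by rewrite -[j in iota 0 j](subnKC (ltnW lt_aj)) iotaD add0n -(subnSK lt_aj).
rewrite -!catA /=; apply: rt_trans.
  by apply: (slide_small_left (j - a.+1) (iota 0 a)); rewrite leqnn ltnSn.
by have := @slide_large_left a 0 a a [::] (iota a.+1 (j - a.+1) ++ q); apply; lia.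
Qed.

Definition run_joinable j X :=
  exists u v, knuth_star (iota 0 j ++ X ++ [:: j]) (u ++ iota 0 j.+1 ++ v).

Lemma iota0S j : iota 0 j.+1 = iota 0 j ++ [:: j].
Proof. by rewrite -addn1 iotaD. Qed.

Lemma run_joinable_nil j : run_joinable j [::].
Proof. by exists [::], [::]; rewrite cats0 -iota0S; exact: rt_refl. Qed.

Lemma run_joinable_trans j X X' p q :
  knuth_star (iota 0 j ++ X ++ [:: j]) (p ++ (iota 0 j ++ X' ++ [:: j]) ++ q) ->
  run_joinable j X' -> run_joinable j X.
Proof.
move=> XX' [u [v X'uv]]; exists (p ++ u), (v ++ q).
by apply: rt_trans XX' _; have := knuth_star_cat p q X'uv; rewrite -!catA.
Qed.

Lemma run_joinable_star j X X' : knuth_star X X' -> run_joinable j X' -> run_joinable j X.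
Proof.
move=> XX'; apply: (run_joinable_trans (p := [::]) (q := [::])).
by rewrite cats0; apply: knuth_star_catl; exact: (knuth_star_cat [::] [:: j] XX').
Qed.

Lemma run_joinable_small j s X : s < j -> run_joinable j X -> run_joinable j (s :: X).
Proof.
move=> lt_sj; apply: (run_joinable_trans (p := [:: s]) (q := [::])).
by rewrite cats0; exact: iota_commute.
Qed.

Lemma run_joinable_single j b : j <= b -> run_joinable j [:: b].
Proof.
move=> le_jb; exists [:: b], [::]; rewrite cats0 iota0S.
by have := @slide_large_left j 0 b j [::] [::]; apply; lia.
Qed.

Lemma run_joinable_large_pair j b b' X : j <= b' <= b ->
  run_joinable j (b' :: X) -> run_joinable j (b :: b' :: X).
Proof.
move=> le_jb'b; apply: (run_joinable_trans (p := [:: b]) (q := [::])); rewrite cats0.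
by have := @slide_large_left j 0 b b' [::] (X ++ [:: j]); apply; lia.
Qed.

Lemma run_joinable_large_small j b s X : s < j < b ->
  run_joinable j (b :: X) -> run_joinable j (b :: s :: X).
Proof.
move=> lt_sjb; apply: (run_joinable_trans (p := [:: s]) (q := [::])); rewrite cats0.
apply: rt_trans (iota_commute _ (_ : s < j)); last lia.
have -> : iota 0 j = iota 0 j.-1 ++ [:: j.-1] by rewrite -iota0S prednK //; lia.
rewrite -!catA /=; apply: (@knuth_starL _ (X ++ [:: j])); rewrite /sep_left; lia.
Qed.

Lemma run_joinable_ascent_end j B b1 b2 : j <= b1 < b2 ->
  run_joinable j (B ++ [:: b1]) -> run_joinable j (B ++ [:: b1; b2]).
Proof.
move=> lt_jb12; apply: (run_joinable_trans (p := [::]) (q := [:: b2])).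
rewrite -!catA /=; have := @knuth_starL (iota 0 j ++ B) [::] b1 b2 j.
by rewrite cats0 -!catA; apply; rewrite /sep_left; lia.
Qed.

Lemma ascent_to_end post pre x y : x < y -> sorted geq (y :: post) ->
  exists B b1 b2, b1 < b2 /\ knuth_star (pre ++ x :: y :: post) (B ++ [:: b1; b2]).
Proof.
elim: post pre x y => [|z post IH] pre x y lt_xy /= sorted_y.
  by exists pre, x, y; split => //; exact: rt_refl.
case/andP: sorted_y => le_zy sorted_z.
have [lt_xz|le_zx] := ltnP x z.
- have [B [b1 [b2 [lt_b12 star]]]] := IH (rcons pre y) x z lt_xz sorted_z.
  exists B, b1, b2; split=> //; apply: rt_trans star; rewrite cat_rcons.
  by apply: (@knuth_starR pre post); rewrite /sep_right; lia.
- have sorted_y : sorted geq (y :: post).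
    by case: post sorted_z {IH} => //= w post /andP [le_wz ->]; rewrite andbT; lia.
  have [B [b1 [b2 [lt_b12 star]]]] := IH (rcons pre x) z y (leq_ltn_trans le_zx lt_xy) sorted_y.
  exists B, b1, b2; split=> //; apply: rt_trans star.
  by rewrite cat_rcons; apply: (@knuth_starL pre post); rewrite /sep_left; lia.
Qed.

Lemma sorted_or_last_ascent (B : seq nat) : sorted geq B \/
  exists pre x y post, [/\ B = pre ++ x :: y :: post, x < y & sorted geq (y :: post)].
Proof.
elim: B => [|b B [sorted_B|[pre [x [y [post [-> lt_xy sorted_y]]]]]]]; first by left.
- case: B sorted_B => [|y post] sorted_B; first by left.
  have [le_yb|lt_by] := leqP y b; first by left; rewrite /= le_yb.
  by right; exists [::], b, y, post.
- by right; exists (b :: pre), x, y, post.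
Qed.

Definition starts_below j (T : seq nat) : bool := if T is s :: _ then s < j else true.

Lemma split_large_prefix j X : j \notin X -> exists B T,
  [/\ X = B ++ T, all (fun b => j < b) B & starts_below j T].
Proof.
elim: X => [|a X IH]; first by exists [::], [::].
rewrite in_cons negb_or => /andP [ne_ja /IH [B [T [-> large_B head_T]]]].
have [lt_aj|le_ja] := ltnP a j; first by exists [::], (a :: B ++ T).
by exists (a :: B), T; rewrite /= large_B ltn_neqAle ne_ja le_ja.
Qed.

Section JoinStep.

Variables (j N : nat).
Hypothesis j_gt0 : 0 < j.
Hypothesis IH : forall X, size X <= N -> j \notin X -> run_joinable j X.

Lemma notin_large A : all (fun b => j < b) A -> j \notin A.
Proof. by move/allP=> large_A; apply/negP=> /large_A; rewrite ltnn. Qed.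

Lemma run_joinable_small_head T : starts_below j T ->
  j \notin T -> size T <= N.+1 -> run_joinable j T.
Proof.
case: T => [|s T] lt_sj; first by rewrite /= => _ _; exact: run_joinable_nil.
rewrite in_cons negb_or /= ltnS => /andP [_ notin_T] size_T.
by apply: run_joinable_small lt_sj _; exact: IH.
Qed.

Lemma run_joinable_split B T : all (fun b => j < b) B ->
  starts_below j T -> j \notin T ->
  size (B ++ T) <= N.+1 -> run_joinable j (B ++ T).
Proof.
(* B collects the letters above j.  If B is decreasing, its first letter (or, for
   B = [:: b], the letter after b) is moved to the left of the run; otherwise its
   last ascent b1 < b2 is moved to the end of B, where b1 lets b2 be exchanged
   with the next letter. *)
move: {2}(size B) (leqnn (size B)) => k; elim: k B T => [|k IHk] B T.
  by rewrite leqn0 => /nilP -> _; exact: run_joinable_small_head.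
move=> size_B large_B head_T notin_T size_BT.
have [sorted_B|[pre [x [y [post [def_B lt_xy sorted_y]]]]]] := sorted_or_last_ascent B.
- case: B size_B large_B sorted_B size_BT => [|b [|b' B]] _ /=.
  + by move=> _ _; exact: run_joinable_small_head.
  + rewrite andbT => lt_jb _; case: T head_T notin_T => [|s T] /= lt_sj notin_T size_T.
      exact/run_joinable_single/ltnW.
    apply: run_joinable_large_small; first lia.
    apply: IH; first by rewrite /=; lia.
    by move: notin_T; rewrite !in_cons !negb_or (ltn_eqF lt_jb) => /andP [_ ->].
  + case/and3P=> lt_jb lt_jb' large_B /andP [le_b'b _] size_BT.
    apply: run_joinable_large_pair; first lia.
    apply: IH; first by rewrite /= size_cat; move: size_BT; rewrite size_cat; lia.
    by rewrite -cat_cons mem_cat negb_or notin_T notin_large //= lt_jb'.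
- have [B2 [b1 [b2 [lt_b12 star]]]] := ascent_to_end pre lt_xy sorted_y.
  have perm_B : perm_eq B (B2 ++ [:: b1; b2]) by rewrite def_B; exact: knuth_star_perm.
  have size_B2 : size B = (size B2).+2 by rewrite (perm_size perm_B) size_cat addn2.
  move: large_B; rewrite (perm_all _ perm_B) all_cat /= andbT => /and3P [large_B2 lt_jb1 _].
  have star_BT : knuth_star (B ++ T) ((B2 ++ [:: b1; b2]) ++ T).
    by rewrite def_B; exact: (knuth_star_cat [::] T star).
  apply: (run_joinable_star star_BT).
  case: T head_T notin_T size_BT {star_BT} => [|s T] /= head_T notin_T size_BT.
    rewrite cats0; apply: run_joinable_ascent_end; first lia.
    apply: IH; first by move: size_BT; rewrite cats0 size_B2 size_cat /=; lia.
    by rewrite notin_large // all_cat large_B2 /= lt_jb1.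
  rewrite -catA; apply: (run_joinable_star (@knuth_starL B2 T b1 b2 s _)).
    by rewrite /sep_left; lia.
  have -> : B2 ++ [:: b1; s; b2] ++ T = (B2 ++ [:: b1]) ++ s :: b2 :: T by rewrite -catA.
  apply: IHk => //=.
  - by move: size_B; rewrite size_B2 size_cat /=; lia.
  - by rewrite all_cat large_B2 /= lt_jb1.
  - rewrite !in_cons !negb_or (ltn_eqF (ltn_trans lt_jb1 lt_b12)) /=.
    by move: notin_T; rewrite in_cons negb_or.
  - by move: size_BT; rewrite !size_cat size_B2 /=; lia.
Qed.

End JoinStep.

Lemma notin_run_joinable j (X : seq nat) : 0 < j -> j \notin X -> run_joinable j X.
Proof.
move=> j_gt0; move: {2}(size X) (leqnn (size X)) => N; elim: N X => [|N IH] X.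
  by rewrite leqn0 => /nilP -> _; exact: run_joinable_nil.
move=> size_X notin_X; have [B [T [def_X large_B head_T]]] := split_large_prefix notin_X.
move: size_X notin_X; rewrite def_X mem_cat negb_or => size_BT /andP [_ notin_T].
exact: (@run_joinable_split j N j_gt0 IH B T).
Qed.

Section CyclicRotation.

Variable T : Type.
Implicit Types s : seq T.

(* Unlike [rot], which is the identity beyond the length, [crot] rotates modulo
   the length. *)
Definition crot k s := iter k (rot 1) s.

Lemma crotD a b s : crot a (crot b s) = crot (a + b) s.
Proof. by rewrite /crot iterD. Qed.

Lemma size_crot k s : size (crot k s) = size s.
Proof. by elim: k => //= k IH; rewrite size_rot. Qed.

Lemma crotE k s : k <= size s -> crot k s = rot k s.
Proof.
elim: k => [|k IH] lt_ks; first by rewrite rot0.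
by rewrite (rotS lt_ks) -IH // ltnW.
Qed.

Lemma crot_mod a b s : a = b %[mod size s] -> crot a s = crot b s.
Proof.
have crotM q s' : crot (q * size s') s' = s'.
  elim: q => // q IH; rewrite mulSn -crotD IH crotE ?rot_size //.
have crot_modn k : crot k s = crot (k %% size s) s.
  rewrite {1}(divn_eq k (size s)) -crotD.
  by have := crotM (k %/ size s) (crot (k %% size s) s); rewrite size_crot.
by move=> eq_ab; rewrite crot_modn eq_ab -crot_modn.
Qed.

Lemma crot_nil k : crot k [::] = [::].
Proof. by elim: k => //= k ->. Qed.

Lemma crotK j s : crot ((size s).-1 * j) (crot j s) = s.
Proof.
case: s => [|x s]; first by rewrite !crot_nil.
by rewrite crotD /= -mulSnr (@crot_mod _ 0) // modnMr mod0n.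
Qed.

Lemma crot1_cons x s : crot 1 (x :: s) = rcons s x.
Proof. exact: rot1_cons. Qed.

Lemma crot_size_cat s1 s2 : crot (size s1) (s1 ++ s2) = s2 ++ s1.
Proof. by rewrite crotE ?size_cat ?leq_addr // rot_size_cat. Qed.

End CyclicRotation.

Lemma perm_crot (T : eqType) k (s : seq T) : perm_eql (crot k s) s.
Proof. by apply/permPl; elim: k => [|k IH] /=; rewrite ?perm_refl // perm_rot. Qed.

Definition cknuth_step (s t : seq nat) :=
  exists k u v, [/\ s = crot k u, t = crot k v & knuth_step u v].

Notation cknuth_star := (clos_refl_trans (seq nat) cknuth_step).

Lemma cknuth_step_sym s t : cknuth_step s t -> cknuth_step t s.
Proof. by case=> k [u [v [-> -> /knuth_step_sym uv]]]; exists k, v, u. Qed.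

Lemma cknuth_step_perm s t : cknuth_step s t -> perm_eq s t.
Proof.
case=> k [u [v [-> -> /knuth_step_perm uv]]].
by rewrite perm_crot perm_sym perm_crot perm_sym.
Qed.

Lemma cknuth_step_crot j s t : cknuth_step s t -> cknuth_step (crot j s) (crot j t).
Proof. by case=> k [u [v [-> -> uv]]]; exists (j + k), u, v; rewrite !crotD. Qed.

Lemma cknuth_star_sym s t : cknuth_star s t -> cknuth_star t s.
Proof.
elim=> [u v /cknuth_step_sym | u | u v w _ IH1 _ IH2].
- exact: rt_step.
- exact: rt_refl.
- exact: rt_trans IH2 IH1.
Qed.

Lemma cknuth_star_crot j s t : cknuth_star s t -> cknuth_star (crot j s) (crot j t).
Proof.
elim=> [u v /(cknuth_step_crot j) | u | u v w _ IH1 _ IH2].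
- exact: rt_step.
- exact: rt_refl.
- exact: rt_trans IH1 IH2.
Qed.

Lemma knuth_star_cknuth u v : knuth_star u v -> cknuth_star u v.
Proof.
elim=> [{}u {}v uv | {}u | u1 u2 u3 _ IH1 _ IH2].
- by apply: rt_step; exists 0, u, v.
- exact: rt_refl.
- exact: rt_trans IH1 IH2.
Qed.

Definition reach_rot s Y := exists k, cknuth_star s (crot k Y).

Lemma reach_rot_refl s : reach_rot s s.
Proof. by exists 0; exact: rt_refl. Qed.

Lemma reach_rot_cknuth s Y Y' : cknuth_star Y Y' -> reach_rot s Y -> reach_rot s Y'.
Proof. by move=> YY' [k sY]; exists k; exact: rt_trans sY (cknuth_star_crot k YY'). Qed.

Lemma reach_rot_knuth s Y Y' : knuth_star Y Y' -> reach_rot s Y -> reach_rot s Y'.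
Proof. by move/knuth_star_cknuth; exact: reach_rot_cknuth. Qed.

Lemma reach_rot_crot j s Y : reach_rot s Y -> reach_rot s (crot j Y).
Proof. by case=> k sY; exists (k + (size Y).-1 * j); rewrite -crotD crotK. Qed.

Definition colword (cs : seq nat) := flatten [seq iota 0 c | c <- cs].

Lemma colword_cat A B : colword (A ++ B) = colword A ++ colword B.
Proof. by rewrite /colword map_cat flatten_cat. Qed.

Lemma colword_rcons cs c : colword (rcons cs c) = colword cs ++ iota 0 c.
Proof. by rewrite -cats1 colword_cat /colword /= cats0. Qed.

Lemma colword_commute cs a q : all (fun c => a < c) cs ->
  knuth_star (colword cs ++ a :: q) (a :: colword cs ++ q).
Proof.
elim: cs => [|c cs IH] /=; first by move=> _; exact: rt_refl.
case/andP=> lt_ac /IH star; rewrite -/(colword cs) -catA.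
apply: rt_trans (knuth_star_catl (iota 0 c) star) _.
by rewrite -catA; exact: iota_commute.
Qed.

Lemma reach_rot_cycle Cp s A B : all (fun a => all (fun c => a < c) Cp) A ->
  reach_rot s (colword Cp ++ A ++ B) -> reach_rot s (colword Cp ++ B ++ A).
Proof.
elim: A B => [|a A IH] B; first by rewrite cats0.
case/andP=> small_a small_A /(reach_rot_knuth (colword_commute _ small_a)).
move/(reach_rot_crot 1); rewrite crot1_cons -cats1 -!catA => /(IH _ small_A).
by rewrite -!catA.
Qed.

Lemma split_first_occurrence (j : nat) W : j \in W ->
  exists X Y, W = X ++ j :: Y /\ j \notin X.
Proof.
move=> W_j; exists (take (index j W) W), (drop (index j W).+1 W); split.
  by rewrite -{1}(cat_take_drop (index j W) W) (drop_nth j) ?index_mem ?nth_index.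
by rewrite in_take // ltnn.
Qed.

Lemma reach_rot_extend_run Cp s A B j R : 0 < j ->
  {in R, forall a, all (fun c => a < c) Cp} ->
  perm_eq (A ++ iota 0 j ++ B) R -> j \in R ->
  reach_rot s (colword Cp ++ A ++ iota 0 j ++ B) ->
  exists A' B', reach_rot s (colword Cp ++ A' ++ iota 0 j.+1 ++ B') /\
                perm_eq (A' ++ iota 0 j.+1 ++ B') R.
Proof.
move=> j_gt0 small_R perm_R R_j reach_AB.
have small_A : all (fun a => all (fun c => a < c) Cp) A.
  by apply/allP => a A_a; apply: small_R; rewrite -(perm_mem perm_R) mem_cat A_a.
have /split_first_occurrence [X [Y [def_BA notin_X]]] : j \in B ++ A.
  rewrite mem_cat orbC; move: R_j.
  by rewrite -(perm_mem perm_R) !mem_cat mem_iota add0n ltnn andbF.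
have [u [v join_X]] := notin_run_joinable j_gt0 notin_X.
exists u, (v ++ Y); split.
  apply: reach_rot_knuth (reach_rot_cycle small_A reach_AB).
  by rewrite -catA def_BA; have := knuth_star_cat (colword Cp) Y join_X; rewrite -!catA.
apply: perm_trans perm_R.
have -> : u ++ iota 0 j.+1 ++ v ++ Y = (u ++ iota 0 j.+1 ++ v) ++ Y by rewrite -!catA.
apply: (@perm_trans _ ((iota 0 j ++ X ++ [:: j]) ++ Y)).
  by rewrite perm_cat2r perm_sym (knuth_star_perm join_X).
by rewrite -!catA /= -def_BA catA perm_catC.
Qed.

Lemma reach_rot_add_column c Cp R s : 0 < c -> {in R, forall a, a < c} ->
  all (fun x => c <= x) Cp -> (forall j, j < c -> j \in R) ->
  reach_rot s (colword Cp ++ R) ->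
  exists R', reach_rot s (colword (rcons Cp c) ++ R') /\ perm_eq R (iota 0 c ++ R').
Proof.
move=> c_gt0 small_R large_Cp R_all reach_R.
have small_Cp : {in R, forall a, all (fun x => a < x) Cp}.
  by move=> a /small_R lt_ac; apply/allP => x /(allP large_Cp); exact: leq_trans lt_ac.
have run j : 0 < j <= c -> exists A B,
    reach_rot s (colword Cp ++ A ++ iota 0 j ++ B) /\ perm_eq (A ++ iota 0 j ++ B) R.
  elim: j => [//|[|j] IH] /andP [_ le_jc].
    have [X [Y [def_R _]]] := split_first_occurrence (R_all 0 c_gt0).
    by exists X, Y; rewrite -def_R.
  have [A [B [reach_AB perm_AB]]] := IH (ltnW le_jc).
  by apply: reach_rot_extend_run small_Cp perm_AB (R_all _ le_jc) reach_AB.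
have [A [B [reach_AB perm_AB]]] : exists A B,
    reach_rot s (colword Cp ++ A ++ iota 0 c ++ B) /\ perm_eq (A ++ iota 0 c ++ B) R.
  by apply: run; rewrite c_gt0 leqnn.
exists (B ++ A); split.
  rewrite colword_rcons -catA (catA (iota 0 c)); apply: reach_rot_cycle reach_AB.
  by apply/allP => a A_a; apply: small_Cp; rewrite -(perm_mem perm_AB) mem_cat A_a.
by rewrite perm_sym; apply: perm_trans perm_AB; rewrite catA perm_catC.
Qed.

Definition conj_seq la := [seq conj_part la t | t <- iota 0 (head 0 la)].

Lemma geq_trans : transitive geq.
Proof. by move=> n m p le_nm le_pn; exact: leq_trans le_pn le_nm. Qed.

Lemma nth_le_head la r : sorted geq la -> nth 0 la r <= head 0 la.
Proof.
case: la => [|x la] sorted_xla; first by rewrite nth_nil.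
case: r => [//|r] /=; have [lt_r|le_r] := ltnP r (size la); last by rewrite nth_default.
exact: (allP (order_path_min geq_trans sorted_xla)) _ (mem_nth 0 lt_r).
Qed.

Lemma ltn_conj_part la t r : sorted geq la -> (r < conj_part la t) = (t < nth 0 la r).
Proof.
elim: la r => [|x la IH] r /= sorted_xla; first by rewrite nth_nil.
have /allP le_x := order_path_min geq_trans sorted_xla.
rewrite /conj_part /= -/(conj_part la t); have [lt_tx|le_xt] := ltnP t x.
  by case: r => [|r] //=; rewrite add1n ltnS IH // (path_sorted sorted_xla).
have -> : conj_part la t = 0.
  apply/eqP; rewrite -leqn0 leqNgt -has_count; apply/hasPn => y /le_x le_yx.
  by rewrite -leqNgt; exact: leq_trans le_yx le_xt.
apply/esym/negbTE; rewrite -leqNgt; case: r => [//|r] /=.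
have [lt_r|le_r] := ltnP r (size la); last by rewrite nth_default.
exact: leq_trans (le_x _ (mem_nth 0 lt_r)) le_xt.
Qed.

Lemma nth_conj_seq la t : t < head 0 la -> nth 0 (conj_seq la) t = conj_part la t.
Proof. by move=> lt_t; rewrite (nth_map 0) ?size_iota // nth_iota. Qed.

Lemma reach_rot_take_colword la s t : sorted geq la ->
  (forall r, count_mem r s = nth 0 la r) -> t <= head 0 la ->
  exists R, reach_rot s (colword (take t (conj_seq la)) ++ R) /\
            forall r, count_mem r R = nth 0 la r - t.
Proof.
move=> sorted_la count_s; elim: t => [|t IH] le_t.
  by exists s; split=> [|r]; rewrite ?subn0 // take0; exact: reach_rot_refl.
have [R [reach_R count_R]] := IH (ltnW le_t).
set c := conj_part la t.
have R_mem j : (j \in R) = (j < c).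
  by rewrite ltn_conj_part // -has_pred1 has_count count_R subn_gt0.
have [R' [reach_R' perm_R]] : exists R',
    reach_rot s (colword (rcons (take t (conj_seq la)) c) ++ R') /\ perm_eq R (iota 0 c ++ R').
  apply: reach_rot_add_column reach_R.
  - by rewrite ltn_conj_part // nth0.
  - by move=> a; rewrite R_mem.
  - apply/(all_nthP 0) => i; rewrite size_take size_map size_iota le_t => lt_it.
    rewrite nth_take // nth_conj_seq; last exact: ltn_trans le_t.
    by apply: sub_count => x /=; apply: leq_ltn_trans; exact: ltnW.
  - by move=> j; rewrite R_mem.
exists R'; split; first by rewrite (take_nth 0) ?size_map ?size_iota // nth_conj_seq.
move=> r; move/permP: perm_R => /(_ (pred1 r)); rewrite count_cat count_R.
rewrite count_uniq_mem ?iota_uniq // mem_iota add0n /= /c ltn_conj_part //.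
by case: ltnP => lt_tr; lia.
Qed.

Lemma reach_rot_colword la s : sorted geq la ->
  (forall r, count_mem r s = nth 0 la r) -> reach_rot s (colword (conj_seq la)).
Proof.
move=> sorted_la count_s.
have [R [reach_R count_R]] := reach_rot_take_colword sorted_la count_s (leqnn _).
have R_nil : R = [::].
  case: R {reach_R} count_R => [//|a R] /(_ a); rewrite /= eqxx.
  by have := nth_le_head a sorted_la; lia.
by move: reach_R; rewrite R_nil cats0 take_oversize // size_map size_iota.
Qed.

Lemma iota_commute_seq a L : all (fun x => x < a) L ->
  knuth_star (iota 0 a ++ L) (L ++ iota 0 a).
Proof.
elim: L => [|x L IH] /=; first by rewrite cats0 => _; exact: rt_refl.
case/andP=> lt_xa /IH star; apply: rt_trans (iota_commute _ lt_xa) _.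
exact: (knuth_star_catl [:: x] star).
Qed.

Lemma iota_commute_iota a c : knuth_star (iota 0 a ++ iota 0 c) (iota 0 c ++ iota 0 a).
Proof.
have small_iota b b' : b' <= b -> all (fun x => x < b) (iota 0 b').
  by move=> le_b'b; apply/allP => x; rewrite mem_iota add0n => /andP [_ /leq_trans]; apply.
have [le_ca|/ltnW le_ac] := leqP c a; first exact/iota_commute_seq/small_iota.
exact/knuth_star_sym/iota_commute_seq/small_iota.
Qed.

Lemma colword_commute_iota A c : knuth_star (colword A ++ iota 0 c) (iota 0 c ++ colword A).
Proof.
elim: A => [|a A IH] /=; first by rewrite cats0; exact: rt_refl.
rewrite -/(colword A) -catA; apply: rt_trans (knuth_star_catl (iota 0 a) IH) _.
by have := knuth_star_cat [::] (colword A) (iota_commute_iota a c); rewrite -!catA.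
Qed.

Lemma cknuth_crot_column cs c : c \in cs -> cknuth_star (colword cs) (crot c (colword cs)).
Proof.
case/split_first_occurrence=> [A [B [-> _]]].
have -> : colword (A ++ c :: B) = colword A ++ iota 0 c ++ colword B by rewrite colword_cat.
have to_front : knuth_star (colword A ++ iota 0 c ++ colword B)
                           (iota 0 c ++ colword A ++ colword B).
  by have := knuth_star_cat [::] (colword B) (colword_commute_iota A c); rewrite -!catA.
apply: cknuth_star_sym; apply: rt_trans (cknuth_star_crot c (knuth_star_cknuth to_front)) _.
rewrite -{1}(size_iota 0 c) crot_size_cat -catA.
exact/knuth_star_cknuth/knuth_star_catl/colword_commute_iota.
Qed.

Section RotationStabiliser.

Variable C : seq nat.

Lemma cknuth_crotD a b : cknuth_star C (crot a C) -> cknuth_star C (crot b C) ->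
  cknuth_star C (crot (a + b) C).
Proof. by move=> Ca Cb; apply: rt_trans Ca _; rewrite -crotD; exact: cknuth_star_crot. Qed.

Lemma cknuth_crotM k a : cknuth_star C (crot a C) -> cknuth_star C (crot (k * a) C).
Proof.
by move=> Ca; elim: k => [|k IH]; [exact: rt_refl | rewrite mulSn; exact: cknuth_crotD].
Qed.

Lemma cknuth_crot_gcd a b : cknuth_star C (crot a C) -> cknuth_star C (crot b C) ->
  cknuth_star C (crot (gcdn a b) C).
Proof.
move=> Ca Cb; have [->|a_gt0] := posnP a; first by rewrite gcd0n.
have [ka kb def_gcd _] := egcdnP b a_gt0.
have [C0|C_gt0] := posnP (size C); first by rewrite (size0nil C0) crot_nil; exact: rt_refl.
(* ka a = kb b + gcd, and -b is (size C - 1) b modulo size C. *)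
rewrite -(@crot_mod _ (ka * a + kb * (size C).-1 * b)).
  by apply: cknuth_crotD; exact: cknuth_crotM.
have -> : ka * a + kb * (size C).-1 * b = kb * b * size C + gcdn a b.
  by rewrite def_gcd mulnAC -{2}(prednK C_gt0) mulnS; lia.
by rewrite modnMDl.
Qed.

Lemma cknuth_crot_foldr_gcd cs : (forall c, c \in cs -> cknuth_star C (crot c C)) ->
  cknuth_star C (crot (foldr gcdn 0 cs) C).
Proof.
elim: cs => [|c cs IH] Ccs /=; first exact: rt_refl.
apply: cknuth_crot_gcd; first by apply: Ccs; rewrite mem_head.
by apply: IH => x cs_x; apply: Ccs; rewrite in_cons cs_x orbT.
Qed.

End RotationStabiliser.

Lemma cknuth_crot_colword la s : sorted geq la ->
  (forall r, count_mem r s = nth 0 la r) -> 0 < d_lambda la ->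
  exists2 r, r < d_lambda la & cknuth_star s (crot r (colword (conj_seq la))).
Proof.
move=> sorted_la count_s d_gt0.
have [k s_k] := reach_rot_colword sorted_la count_s.
have stab_d : cknuth_star (colword (conj_seq la)) (crot (d_lambda la) (colword (conj_seq la))).
  by apply: cknuth_crot_foldr_gcd => c; exact: cknuth_crot_column.
exists (k %% d_lambda la); first by rewrite ltn_mod.
apply: rt_trans s_k _; rewrite {1}(divn_eq k (d_lambda la)) addnC -crotD.
exact/cknuth_star_crot/cknuth_star_sym/cknuth_crotM.
Qed.

Lemma nth_rot1 (T : Type) (x0 : T) s i : i < size s ->
  nth x0 (rot 1 s) i = nth x0 s (i.+1 %% size s).
Proof.
case: s => [//|x s] /= lt_is; rewrite rot1_cons nth_rcons.
case: (ltngtP i (size s)) => [lt_i|gt_i|->]; first by rewrite modn_small.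
- by move: lt_is; rewrite ltnS leqNgt gt_i.
- by rewrite modnn.
Qed.

Section TabloidWord.

Variables (n : nat) (la : seq nat).
Local Notation row_fun := {ffun 'I_n -> 'I_(size la)}.
Implicit Types T : row_fun.

Definition word T : seq nat := [seq val (T i) | i <- enum 'I_n].

Lemma size_word T : size (word T) = n.
Proof. by rewrite size_map size_enum_ord. Qed.

Lemma nth_word T (i : 'I_n) : nth 0 (word T) i = T i.
Proof. by rewrite (nth_map i) ?size_enum_ord // nth_ord_enum. Qed.

Lemma word_inj : injective word.
Proof. by move=> T T' eqTT'; apply/ffunP => i; apply: val_inj; rewrite /= -!nth_word eqTT'. Qed.

Lemma card_row T (r : 'I_(size la)) : #|[set x | T x == r]| = count_mem (val r) (word T).
Proof.
by rewrite cardsE cardE /enum_mem size_filter /word count_map enumT.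
Qed.

Lemma count_word T : is_tabloid T -> forall r, count_mem r (word T) = nth 0 la r.
Proof.
move=> /forallP tabT r; have [lt_r|le_r] := ltnP r (size la).
  by rewrite -(eqP (tabT (Ordinal lt_r))) card_row.
rewrite nth_default //; apply/count_memPn/mapP => -[i _ eq_r].
by move: (ltn_ord (T i)); rewrite -eq_r ltnNge le_r.
Qed.

Lemma is_tabloid_perm T T' : perm_eq (word T) (word T') -> is_tabloid T -> is_tabloid T'.
Proof.
move=> /permP perm_TT' /forallP tabT; apply/forallP => r.
by rewrite card_row -perm_TT' -card_row; exact: tabT.
Qed.

Lemma tau_nth T (z : 'I_n) : z.+1 < n ->
  (z \in tau T) = (nth 0 (word T) z < nth 0 (word T) z.+1).
Proof.
move=> lt_zn; rewrite inE -[z.+1](modn_small lt_zn).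
by rewrite -[_ %% n]/(val (ordS z)) !nth_word.
Qed.

Definition swap_ord (i x : 'I_n) := if x == i then ordS i else if x == ordS i then i else x.

Lemma swap_ordK i : involutive (swap_ord i).
Proof.
move=> x; rewrite /swap_ord; case: (x =P i) => [->|ne_xi].
  by case: (ordS i =P i) => [->|_]; rewrite ?eqxx.
case: (x =P ordS i) => [->|ne_xSi]; first by rewrite eqxx.
by case: (x =P i); case: (x =P ordS i).
Qed.

Lemma swap_entriesE T i x : swap_entries T i x = T (swap_ord i x).
Proof. by rewrite ffunE. Qed.

Lemma swap_ord_ordS i x : swap_ord (ordS i) (ordS x) = ordS (swap_ord i x).
Proof.
rewrite /swap_ord !(inj_eq (@ordS_inj n)).
by case: (x =P i) => // _; case: eqP.
Qed.

Lemma nth_swap_pair (P Q : seq nat) x y j :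
  nth 0 (P ++ [:: y; x] ++ Q) j = nth 0 (P ++ [:: x; y] ++ Q)
    (if j == size P then (size P).+1 else if j == (size P).+1 then size P else j).
Proof.
case: eqP => [->|ne_j]; first by rewrite !nth_cat ltnn subnn ifN ?subSnn // -leqNgt.
case: eqP => [->|ne_j']; first by rewrite !nth_cat ltnn subnn ifN ?subSnn // -leqNgt.
rewrite !nth_cat; case: ltnP => // le_Pj.
by case def_k: (j - size P) => [|[|k]] //; lia.
Qed.

Lemma word_swap T P Q x y (i : 'I_n) : word T = P ++ [:: x; y] ++ Q -> val i = size P ->
  word (swap_entries T i) = P ++ [:: y; x] ++ Q.
Proof.
move=> wordT val_i; have size_T := size_word T; rewrite wordT !size_cat /= in size_T.
have val_ordS : val (ordS i) = (size P).+1 by rewrite /= val_i modn_small //; lia.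
apply: (@eq_from_nth _ 0) => [|j]; first by rewrite size_word !size_cat /=; lia.
rewrite size_word => lt_jn; rewrite nth_swap_pair -[j]/(val (Ordinal lt_jn)) nth_word.
rewrite swap_entriesE -nth_word wordT /swap_ord -!val_eqE val_i val_ordS /=.
by case: ifP => _; rewrite ?val_ordS //; case: ifP => _; rewrite ?val_i.
Qed.

Definition rot_rows T : row_fun := [ffun i => T (ordS i)].

Lemma word_rot_rows T : word (rot_rows T) = rot 1 (word T).
Proof.
apply: (@eq_from_nth _ 0) => [|j]; first by rewrite size_rot !size_word.
rewrite size_word => lt_jn; rewrite nth_rot1 size_word //.
by rewrite -[j]/(val (Ordinal lt_jn)) nth_word ffunE -nth_word.
Qed.

Lemma word_iter_rot_rows k T : word (iter k rot_rows T) = crot k (word T).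
Proof. by elim: k => //= k IH; rewrite word_rot_rows IH. Qed.

Definition knuth_rel T T' : bool :=
  [exists i : 'I_n, [&& T' == swap_entries T i,
     ~~ (tau T \subset tau T') & ~~ (tau T' \subset tau T)]].

Lemma knuth_rel_sym T T' : knuth_rel T T' -> knuth_rel T' T.
Proof.
case/existsP => i /and3P [/eqP def_T' sub1 sub2]; apply/existsP; exists i.
by rewrite sub1 sub2 !andbT def_T'; apply/eqP/ffunP => x; rewrite !swap_entriesE swap_ordK.
Qed.

Lemma tau_rot_rows T j : (j \in tau (rot_rows T)) = (ordS j \in tau T).
Proof. by rewrite !inE !ffunE. Qed.

Lemma not_subset_rot_rows T T' :
  ~~ (tau T \subset tau T') -> ~~ (tau (rot_rows T) \subset tau (rot_rows T')).
Proof.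
case/subsetPn => z in_T notin_T'; apply/subsetPn; exists (ord_pred z);
  by rewrite tau_rot_rows ord_predK.
Qed.

Lemma knuth_rel_rot_rows T T' : knuth_rel T T' -> knuth_rel (rot_rows T) (rot_rows T').
Proof.
case/existsP => i /and3P [/eqP -> sub1 sub2]; apply/existsP; exists (ord_pred i).
rewrite !not_subset_rot_rows // !andbT; apply/eqP/ffunP => x.
by rewrite !(ffunE, swap_entriesE) -swap_ord_ordS ord_predK.
Qed.

Lemma knuth_rel_swap T (i z : 'I_n) (T' := swap_entries T i) :
  [&& i \in tau T, i \notin tau T', z \in tau T' & z \notin tau T] ||
  [&& i \in tau T', i \notin tau T, z \in tau T & z \notin tau T'] ->
  knuth_rel T T'.
Proof.
move=> flips; apply/existsP; exists i; rewrite eqxx /=.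
case/orP: flips => /and4P [in1 out1 in2 out2]; apply/andP; split; apply/subsetPn;
  by [exists i | exists z | exists z | exists i].
Qed.

Lemma tau_at T P Q k (z : 'I_n) : word T = P ++ Q -> val z = size P + k -> z.+1 < n ->
  (z \in tau T) = (nth 0 Q k < nth 0 Q k.+1).
Proof.
move=> wordT val_z lt_zn; rewrite tau_nth // wordT val_z -addnS.
by rewrite !nth_cat !ltnNge !leq_addr /= !addKn.
Qed.

Lemma knuth_step_lift T v : knuth_step (word T) v -> exists2 T', knuth_rel T T' & word T' = v.
Proof.
move def_u: (word T) => u step; have size_u : size u = n by rewrite -def_u size_word.
case: step def_u size_u => [p q c x y sep | p q c x y sep] wordT.
- rewrite size_cat size_rcons /= => size_u.
  have lt_i : (size p).+1 < n by lia.
  have lt_z : size p < n by lia.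
  set i := Ordinal lt_i; set z := Ordinal lt_z.
  have wordT' : word (swap_entries T i) = rcons p c ++ [:: y; x] ++ q.
    by apply: word_swap wordT _; rewrite size_rcons.
  rewrite cat_rcons in wordT; rewrite cat_rcons in wordT' *.
  exists (swap_entries T i) => //; apply: (knuth_rel_swap (z := z)).
  have tau_i T0 Q : word T0 = p ++ Q -> (i \in tau T0) = (nth 0 Q 1 < nth 0 Q 2).
    by move=> wordT0; rewrite (tau_at (k := 1) wordT0) ?addn1 //=; lia.
  have tau_z T0 Q : word T0 = p ++ Q -> (z \in tau T0) = (nth 0 Q 0 < nth 0 Q 1).
    by move=> wordT0; rewrite (tau_at (k := 0) wordT0) ?addn0 //=; lia.
  rewrite (tau_i _ _ wordT) (tau_i _ _ wordT') (tau_z _ _ wordT) (tau_z _ _ wordT') /=.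
  by move: sep; rewrite /sep_left; lia.
- rewrite size_cat /= => size_u.
  have lt_i : size p < n by lia.
  have lt_z : (size p).+1 < n by lia.
  set i := Ordinal lt_i; set z := Ordinal lt_z.
  have wordT' : word (swap_entries T i) = p ++ [:: y; x] ++ c :: q by exact: word_swap wordT _.
  exists (swap_entries T i) => //; apply: (knuth_rel_swap (z := z)).
  have tau_i T0 Q : word T0 = p ++ Q -> (i \in tau T0) = (nth 0 Q 0 < nth 0 Q 1).
    by move=> wordT0; rewrite (tau_at (k := 0) wordT0) ?addn0 //=; lia.
  have tau_z T0 Q : word T0 = p ++ Q -> (z \in tau T0) = (nth 0 Q 1 < nth 0 Q 2).
    by move=> wordT0; rewrite (tau_at (k := 1) wordT0) ?addn1 //=; lia.
  rewrite (tau_i _ _ wordT) (tau_i _ _ wordT') (tau_z _ _ wordT) (tau_z _ _ wordT') /=.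
  by move: sep; rewrite /sep_right; lia.
Qed.

Lemma knuth_rel_iter_rot_rows k T T' :
  knuth_rel T T' -> knuth_rel (iter k rot_rows T) (iter k rot_rows T').
Proof. by move=> TT'; elim: k => //= k; exact: knuth_rel_rot_rows. Qed.

Lemma cknuth_step_lift T t : cknuth_step (word T) t -> exists2 T', knuth_rel T T' & word T' = t.
Proof.
case=> k [u [v [wordT -> uv]]].
have size_u : size u = n by rewrite -(size_crot k) -wordT size_word.
set Tu := iter (n.-1 * k) rot_rows T.
have wordTu : word Tu = u by rewrite word_iter_rot_rows wordT -size_u crotK.
rewrite -wordTu in uv; have [T'u knuth_u wordT'u] := knuth_step_lift uv.
exists (iter k rot_rows T'u); last by rewrite word_iter_rot_rows wordT'u.
have <- : iter k rot_rows Tu = T by apply: word_inj; rewrite word_iter_rot_rows wordTu.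
exact: knuth_rel_iter_rot_rows.
Qed.

End TabloidWord.

Lemma cknuth_star_connect n la s t : cknuth_star s t ->
  forall X : tabloid n la, word (val X) = s ->
  exists2 Y : tabloid n la, connect (@knuth_move n la) X Y & word (val Y) = t.
Proof.
elim=> [u v uv | u | u v w _ IH1 _ IH2] X wordX.
- rewrite -wordX in uv; have [T' XT' wordT'] := cknuth_step_lift uv.
  have tabT' : is_tabloid T'.
    by apply: is_tabloid_perm (valP X); rewrite wordT'; exact: cknuth_step_perm.
  by exists (exist _ T' tabT') => //; exact: connect1.
- by exists X => //; exact: connect0.
- have [Y XY wordY] := IH1 X wordX; have [Z YZ wordZ] := IH2 Y wordY.
  by exists Z => //; exact: connect_trans XY YZ.
Qed.

Lemma d_lambda_gt0 n la : 0 < n -> is_partition n la -> 0 < d_lambda la.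
Proof.
move=> n_gt0 /and3P [_ pos_la /eqP sum_la].
case: la pos_la sum_la => [|[|x] la] //=; first by move=> _ sum0; rewrite -sum0 in n_gt0.
by rewrite /d_lambda /= gcdn_gt0 /conj_part /=.
Qed.

Lemma card_connect_classes_le (T : finType) (e : rel T) (U : eqType) (f : T -> U) d
    (g : 'I_d -> U) : connect_sym e -> injective f ->
  (forall x, exists r, exists2 y, connect e x y & f y = g r) ->
  #|[set [set y | connect e x y] | x : T]| <= d.
Proof.
move=> sym_e inj_f reach_g.
pose cls r := [set y | [exists x, (f x == g r) && connect e x y]].
apply: (@leq_trans #|[set cls r | r : 'I_d]|).
  2: by rewrite -[d in _ <= d]card_ord leq_imset_card.
apply: subset_leq_card; apply/subsetP => _ /imsetP [x _ ->].
have [r [y xy fy]] := reach_g x.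
apply/imsetP; exists r => //; apply/setP => z; rewrite !inE.
apply/idP/existsP => [xz | [y' /andP [/eqP fy' y'z]]].
  by exists y; rewrite fy eqxx /=; apply: connect_trans xz; rewrite sym_e.
by apply: connect_trans xy _; rewrite (inj_f y y') // fy fy'.
Qed.

Theorem proposition8p2 (n : nat) (la : seq nat) :
  0 < n -> is_partition n la -> #|components_A n la| <= d_lambda la.
Proof.
move=> n_gt0 la_part; have sorted_la : sorted geq la by case/and3P: la_part.
apply: (@card_connect_classes_le _ _ _ (fun X : tabloid n la => word (val X)) _
          (fun r => crot r (colword (conj_seq la)))).
- by apply: sym_connect_sym => X Y; apply/idP/idP; exact: knuth_rel_sym.
- by move=> X Y /word_inj /val_inj.
- move=> X; have [r lt_rd X_r] := cknuth_crot_colword sorted_la (count_word (valP X))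
    (d_lambda_gt0 n_gt0 la_part).
  have [Y XY wordY] := cknuth_star_connect X_r (erefl _).
  by exists (Ordinal lt_rd), Y.
Qed.
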